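(* Let $\alpha>-1/2$. There is a constant $C$ depending only on $\alpha$ such that for every $\varepsilon\in(0,1)$ and every $(\varepsilon,\alpha)$-thin set $S\subset\mathbb{R}^+$ the following hold: if $a\ge1$ and $b-a\ge\frac1a$, then $$\mu_\alpha(S\cap[a,b])\le C\varepsilon\,\mu_\alpha([a,b]);$$ and if $b>1$, then $$\mu_\alpha(S\cap[0,b])\le C\varepsilon\,\mu_\alpha([0,b]).$$
   Context: Fix $\alpha>-1/2$ and let $d\mu_\alpha(x)=(2\pi)^{\alpha+1}x^{2\alpha+1}\,dx$ on $\mathbb{R}^+=[0,\infty)$. For $\varepsilon\in(0,1)$, a measurable set $S\subset\mathbb{R}^+$ is called $(\varepsilon,\alpha)$-thin if $\mu_\alpha(S\cap[x,x+1])\le\varepsilon\,\mu_\alpha([x,x+1])$ for all $0\le x\le1$, and $\mu_\alpha(S\cap[x,x+\frac1x])\le\varepsilon\,\mu_\alpha([x,x+\frac1x])$ for all $x\ge2$. *)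

From HB Require Import structures.
From mathcomp Require Import all_boot all_order all_algebra.
From mathcomp Require Import all_classical all_reals all_analysis.
Set Implicit Arguments. Unset Strict Implicit. Unset Printing Implicit Defensive.
Import Order.TTheory GRing.Theory Num.Theory.
Local Open Scope classical_set_scope.
Local Open Scope ring_scope.

Definition wdens {R : realType} (alpha x : R) : R :=
  ((2 * pi) `^ (alpha + 1) * x `^ (2 * alpha + 1))%R.

Definition mu_alpha {R : realType} (alpha : R) (A : set R) : \bar R :=
  (\int[@lebesgue_measure R]_(x in A `&` `[0%R, +oo[) (wdens alpha x)%:E)%E.

Definition thin {R : realType} (eps alpha : R) (S : set R) : Prop :=
  (forall x : R, 0 <= x <= 1 ->
     (mu_alpha alpha (S `&` `[x, (x + 1)%R]) <= eps%:E * mu_alpha alpha `[x, (x + 1)%R])%E)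
  /\
  (forall x : R, 2 <= x ->
     (mu_alpha alpha (S `&` `[x, (x + x^-1)%R]) <= eps%:E * mu_alpha alpha `[x, (x + x^-1)%R])%E).

From HB Require Import structures.
From mathcomp Require Import all_boot all_order all_algebra.
From mathcomp Require Import all_classical all_reals all_analysis.
From mathcomp Require Import lra ring measurable_realfun.
Set Implicit Arguments. Unset Strict Implicit. Unset Printing Implicit Defensive.
Import Order.TTheory GRing.Theory Num.Theory.
Local Open Scope classical_set_scope.
Local Open Scope ring_scope.

(* Call [[u, v]] sparse when [S] occupies at most an [eps]-fraction of its
   mu_alpha-mass; sparse intervals concatenate.  From [x >= 2] the thin windows
   [x, x + x^-1] tile the half-line via [x_{n+1} = x_n + x_n^-1], and [x_n]
   grows like [sqrt (2 n)], so every [b] is overshot by less than [x_0^-1];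
   near the origin the windows [0, 1], [1, 2] do the same job.  Hence any
   admissible [[a, b]] lies in a sparse interval [[u, z]] with [z <= 2 b] and
   [z - u <= 10 (b - a)].  As the density is increasing and doubles up to the
   factor [K = 2^(2 alpha + 1)], [mu [u, z] <= 20 K^2 mu [a, b]]. *)

Section grid.
Context {R : archiRealFieldType} (y : R).
Hypothesis y_gt0 : 0 < y.

Definition grid (n : nat) : R := iter n (fun t => t + t^-1) y.

Lemma gridS n : grid n.+1 = grid n + (grid n)^-1.
Proof. by []. Qed.

Lemma grid_ge n : y <= grid n.
Proof.
elim: n => [|n IH] //; rewrite gridS (le_trans IH) // lerDl invr_ge0.
exact: le_trans (ltW y_gt0) IH.
Qed.

Lemma grid_gt0 n : 0 < grid n.
Proof. exact: lt_le_trans y_gt0 (grid_ge n). Qed.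

Lemma grid_leS n : grid n <= grid n.+1.
Proof. by rewrite gridS lerDl invr_ge0 ltW // grid_gt0. Qed.

(* Squaring [t + t^-1] adds [2 + t^-2], so [grid n] grows like [sqrt (2 n)]. *)
Lemma grid_sqr_ge n : 2 * n%:R <= grid n ^+ 2.
Proof.
elim: n => [|n IH]; first by rewrite mulr0 sqr_ge0.
have xV : grid n * (grid n)^-1 = 1 by rewrite mulfV // gt_eqF // grid_gt0.
by rewrite gridS -natr1; nra.
Qed.

Lemma grid_overshoot b : y <= b -> exists n, b <= grid n <= b + y^-1.
Proof.
move=> yb; have exn : exists n, b <= grid n.
  exists (Num.truncn (b ^+ 2)).+1.
  have := truncnS_gt (b ^+ 2); have := grid_sqr_ge (Num.truncn (b ^+ 2)).+1.
  have := grid_gt0 (Num.truncn (b ^+ 2)).+1; nra.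
case: (ex_minnP exn) => -[|m] bm min_m.
  by exists 0%N; rewrite bm /= (le_trans yb) // lerDl invr_ge0 ltW.
have mb : grid m < b by rewrite ltNge; apply/negP => /min_m; rewrite ltnn.
exists m.+1; rewrite bm gridS /=.
have : (grid m)^-1 <= y^-1 by rewrite lef_pV2 ?posrE ?grid_gt0 // grid_ge.
lra.
Qed.

End grid.

Section mu_alpha.
Context {R : realType} (alpha : R).
Local Notation W := (wdens alpha).
Local Notation mu := (mu_alpha alpha).
Local Notation leb := (@lebesgue_measure R).

Lemma wdens_ge0 x : 0 <= W x.
Proof. by rewrite /wdens mulr_ge0 // powR_ge0. Qed.

Lemma wdens_mul2 x : 0 <= x -> W (2 * x) = 2 `^ (2 * alpha + 1) * W x.
Proof. by move=> x0; rewrite /wdens [(2 * x) `^ _]powRM //; ring. Qed.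

Lemma measurable_wdens (D : set R) : measurable_fun D (fun x => (W x)%:E).
Proof.
apply/measurable_EFinP/measurable_funM; first exact: measurable_cst.
exact: measurable_funTS (measurable_powR _).
Qed.

Lemma mu_alpha_ge0 A : (0 <= mu A)%E.
Proof. by apply: integral_ge0 => x _; rewrite lee_fin wdens_ge0. Qed.

Lemma le_mu_alpha A B : measurable A -> measurable B -> A `<=` B ->
  (mu A <= mu B)%E.
Proof.
move=> mA mB AB; apply: ge0_subset_integral; first 2 last.
- exact: measurable_wdens.
- by move=> x _; rewrite lee_fin wdens_ge0.
- exact: setSI.
all: exact: measurableI.
Qed.

Lemma mu_alpha_setU A B : measurable A -> measurable B -> [disjoint A & B] ->
  mu (A `|` B) = (mu A + mu B)%E.
Proof.
move=> mA mB AB; rewrite /mu_alpha setIUl ge0_integral_setU //; first 2 last.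
- exact: measurable_wdens.
- by move=> x _; rewrite lee_fin wdens_ge0.
- by apply/disj_setPS => x [[Ax _] [Bx _]]; apply: (disj_setPS AB).
all: exact: measurableI.
Qed.

Lemma mu_alpha_setD1 A r : measurable A -> mu (A `\ r) = mu A.
Proof.
move=> mA; rewrite /mu_alpha setIDAC setIDA integral_setD1 //.
- by apply: measurableD => //; exact: measurableI.
- exact: measurable_wdens.
Qed.

Lemma mu_alpha_Sset1 A r : A `<=` [set r] -> mu A = 0%E.
Proof. by move=> Ar; apply: (@integral_Sset1 _ _ _ r) => x [/Ar]. Qed.

Lemma mu_alpha_itv_split A (u v w : R) : measurable A -> u <= v -> v <= w ->
  mu (A `&` `[u, w]) = (mu (A `&` `[u, v]) + mu (A `&` `[v, w]))%E.
Proof.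
move=> mA uv vw; have mAI i := measurableI A [set` i] mA (measurable_itv i).
rewrite (@itv_bndbnd_setU _ _ _ (BRight v)) ?bnd_simp // setIUr.
rewrite mu_alpha_setU //; last first.
  apply/disj_setPS => x [[_]] /=; rewrite !in_itv /= => /andP[_ xv] [_ /andP[vx _]].
  by move: (lt_le_trans vx xv); rewrite ltxx.
by rewrite -(setDitv1l _ _ true) setIDA mu_alpha_setD1.
Qed.

Lemma mu_alpha_itv (u v : R) : 0 <= u ->
  mu `[u, v] = (\int[leb]_(x in `[u, v]) (W x)%:E)%E.
Proof.
move=> u0; congr integral; apply/setIidl => x /=.
by rewrite !in_itv /= andbT => /andP[/(le_trans u0)].
Qed.

Lemma integral_itv_cst (c u v : R) : u <= v ->
  (\int[leb]_(x in `[u, v]) c%:E = ((v - u) * c)%:E)%E.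
Proof.
move=> uv; rewrite -[X in integral _ _ X]/(cst c%:E) integral_cst //.
rewrite [X in (_ * X)%E](_ : _ = (v - u)%:E); last first.
  apply: eq_trans (lebesgue_measure_itv `[u, v]) _; rewrite /= lte_fin.
  by case: ltgtP uv => [_ _|//|-> _]; rewrite ?subrr.
by rewrite -EFinM mulrC.
Qed.

Definition sparse_itv (eps : R) (S : set R) (u v : R) : Prop :=
  (mu (S `&` `[u, v]) <= eps%:E * mu `[u, v])%E.

Lemma sparse_itv_refl eps S u : sparse_itv eps S u u.
Proof.
by rewrite /sparse_itv set_itv1 !(@mu_alpha_Sset1 _ u) ?mule0 //; exact: subIsetr.
Qed.

Lemma sparse_itv_cat eps S (u v w : R) : measurable S -> 0 <= eps ->
  u <= v -> v <= w -> sparse_itv eps S u v -> sparse_itv eps S v w ->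
  sparse_itv eps S u w.
Proof.
move=> mS eps0 uv vw Suv Svw; rewrite /sparse_itv (mu_alpha_itv_split mS uv vw).
have := mu_alpha_itv_split measurableT uv vw; rewrite !setTI => ->.
by rewrite ge0_muleDr ?mu_alpha_ge0 //; exact: leeD.
Qed.

Section thin.
Variables (eps : R) (S : set R).
Hypotheses (thinS : thin eps alpha S) (mS : measurable S) (eps_ge0 : 0 <= eps).

Lemma thin_sparse_grid (y : R) n : 2 <= y -> sparse_itv eps S y (grid y n).
Proof.
move=> y2; have y0 : 0 < y by apply: lt_le_trans y2.
elim: n => [|n IH]; first exact: sparse_itv_refl.
apply: (sparse_itv_cat mS eps_ge0 _ _ IH); rewrite ?grid_ge ?grid_leS //.
exact: thinS.2 _ (le_trans y2 (grid_ge y0 n)).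
Qed.

Lemma thin_sparse_overshoot (y b : R) : 2 <= y -> y <= b ->
  exists z, b <= z <= b + y^-1 /\ sparse_itv eps S y z.
Proof.
move=> y2 yb; have [|n gn] := grid_overshoot _ yb; first lra.
by exists (grid y n); split => //; exact: thin_sparse_grid.
Qed.

Lemma thin_sparse_0_2 : sparse_itv eps S 0 2.
Proof.
apply: (@sparse_itv_cat _ _ _ 1) => //; try lra.
- by have := thinS.1 0; rewrite add0r; apply; rewrite lexx ler01.
- by apply: thinS.1; rewrite ler01 lexx.
Qed.

Lemma thin_sparse_prefix (b : R) : 1 <= b ->
  exists z, b <= z <= 2 * b /\ sparse_itv eps S 0 z.
Proof.
move=> b1; have [b2|b2] := ltP b 2.
  by exists 2; split; [lra|exact: thin_sparse_0_2].
have [//|z [bz S2z]] := @thin_sparse_overshoot 2 b (lexx _).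
exists z; split; first lra.
by apply: (sparse_itv_cat mS eps_ge0 _ _ thin_sparse_0_2 S2z); lra.
Qed.

End thin.

Hypothesis alpha_gt : - (1 / 2) < alpha.

Lemma ler_wdens x y : 0 <= x -> x <= y -> W x <= W y.
Proof.
move=> x0 xy; rewrite /wdens ler_wpM2l ?powR_ge0 // ge0_ler_powR // ?nnegrE.
- by have := alpha_gt; lra.
- exact: le_trans xy.
Qed.

Lemma mu_alpha_itv_le (u v : R) : 0 <= u -> u <= v ->
  (mu `[u, v] <= ((v - u) * W v)%:E)%E.
Proof.
move=> u0 uv; rewrite mu_alpha_itv // -integral_itv_cst //.
apply: ge0_le_integral => //.
- by move=> x _; rewrite lee_fin; exact: wdens_ge0.
- exact: measurable_wdens.
- move=> x /=; rewrite in_itv /= lee_fin => /andP[ux xv].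
  by apply: ler_wdens => //; exact: le_trans ux.
Qed.

Lemma mu_alpha_itv_ge (u v : R) : 0 <= u -> u <= v ->
  (((v - u) * W u)%:E <= mu `[u, v])%E.
Proof.
move=> u0 uv; rewrite mu_alpha_itv // -integral_itv_cst //.
apply: ge0_le_integral => //.
- by move=> x _; rewrite lee_fin; exact: wdens_ge0.
- exact: measurable_wdens.
- by move=> x /=; rewrite in_itv /= lee_fin => /andP[ux xv]; exact: ler_wdens.
Qed.

Lemma mu_alpha_itv_ge_half (a b : R) : 0 <= a -> a <= b ->
  (((b - a) / 2 * W (b / 2))%:E <= mu `[a, b])%E.
Proof.
move=> a0 ab; pose m := (a + b) / 2.
have mb : m <= b by rewrite /m; lra.
have Wm : W (b / 2) <= W m by apply: ler_wdens; rewrite /m; lra.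
have mu_mb : (mu `[m, b] <= mu `[a, b])%E.
  apply: le_mu_alpha => // x /=; rewrite !in_itv /= => /andP[mx ->].
  by rewrite andbT (le_trans _ mx) // /m; lra.
apply: le_trans (le_trans (mu_alpha_itv_ge _ mb) mu_mb).
rewrite lee_fin ler_pM //; first by rewrite /m; lra.
- exact: wdens_ge0.
- by rewrite /m; lra.
- by rewrite /m; lra.
Qed.

Local Notation K := (2 `^ (2 * alpha + 1) : R).

(* [mu [u, z] <= (z - u) W (2 b) = (z - u) K^2 W (b / 2)], while
   [mu [a, b] >= (b - a) / 2 * W (b / 2)]. *)
Lemma mu_alpha_itv_cover (u z a b c : R) : 0 <= u -> u <= a -> a <= b ->
  u <= z -> z <= 2 * b -> 0 <= c -> z - u <= c * (b - a) ->
  (mu `[u, z] <= (2 * c * K ^+ 2)%:E * mu `[a, b])%E.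
Proof.
move=> u0 ua ab uz zb c0 zuc; have b0 : 0 <= b by lra.
have K0 : 0 <= K by exact: powR_ge0.
have Wz : W z <= K ^+ 2 * W (b / 2).
  rewrite (le_trans (ler_wdens _ zb)) ?(le_trans u0) //.
  rewrite expr2 -mulrA -!wdens_mul2 ?mulr_ge0 //.
  by have -> : 2 * (2 * (b / 2)) = 2 * b by field.
apply: (le_trans (mu_alpha_itv_le u0 uz)).
have a0 : 0 <= a := le_trans u0 ua.
apply: le_trans (lee_wpmul2l _ (mu_alpha_itv_ge_half a0 ab));
  last by rewrite lee_fin !mulr_ge0 // sqr_ge0.
rewrite -EFinM lee_fin.
have -> : 2 * c * K ^+ 2 * ((b - a) / 2 * W (b / 2)) =
          c * (b - a) * (K ^+ 2 * W (b / 2)) by field.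
by rewrite ler_pM // ?subr_ge0 // wdens_ge0.
Qed.

Lemma sparse_itv_cover eps S (u z a b c : R) : measurable S -> 0 <= eps ->
  sparse_itv eps S u z -> 0 <= u -> u <= a -> a <= b -> b <= z -> z <= 2 * b ->
  0 <= c -> z - u <= c * (b - a) ->
  (mu (S `&` `[a, b]) <= (2 * c * K ^+ 2 * eps)%:E * mu `[a, b])%E.
Proof.
move=> mS eps0 Suz u0 ua ab bz zb c0 zuc.
have mu_ab_uz : (mu (S `&` `[a, b]) <= mu (S `&` `[u, z]))%E.
  apply: le_mu_alpha; try exact: measurableI.
  apply: setIS => x /=; rewrite !in_itv /= => /andP[ax xb].
  by rewrite (le_trans ua ax) (le_trans xb bz).
apply: (le_trans mu_ab_uz); apply: (le_trans Suz).
rewrite EFinM (muleC _ eps%:E) -muleA lee_wpmul2l ?lee_fin //.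
by apply: mu_alpha_itv_cover => //; lra.
Qed.

End mu_alpha.

Theorem lemma5p2 (R : realType) (alpha : R) (halpha : - (1 / 2) < alpha) :
  exists C : R,
    forall (eps : R), 0 < eps < 1 ->
    forall (S : set R), measurable S -> S `<=` `[0%R, +oo[ ->
      thin eps alpha S ->
      (forall a b : R, 1 <= a -> a^-1 <= b - a ->
         (mu_alpha alpha (S `&` `[a, b]) <= (C * eps)%:E * mu_alpha alpha `[a, b])%E)
      /\
      (forall b : R, 1 < b ->
         (mu_alpha alpha (S `&` `[0%R, b]) <= (C * eps)%:E * mu_alpha alpha `[0%R, b])%E).
Proof.
exists (2 * 10 * (2 `^ (2 * alpha + 1)) ^+ 2) => eps /andP[/ltW eps0 _] S mS _ thinS.
split=> [a b a1 ab|b b1].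
- have a0 : 0 < a by lra.
  have aV0 : 0 < a^-1 by rewrite invr_gt0.
  have [a2|a2] := leP 2 a.
    have [|z [/andP[bz zb] Saz]] := thin_sparse_overshoot thinS mS eps0 a2 (_ : a <= b); first lra.
    by apply: (sparse_itv_cover halpha mS eps0 Saz) => //; lra.
  have [|z [/andP[bz zb] S0z]] := thin_sparse_prefix thinS mS eps0 (b := b); first lra.
  have aV : 2^-1 < a^-1 by rewrite ltf_pV2 ?posrE.
  by apply: (sparse_itv_cover halpha mS eps0 S0z) => //; lra.
- have [|z [/andP[bz zb] S0z]] := thin_sparse_prefix thinS mS eps0 (b := b); first lra.
  by apply: (sparse_itv_cover halpha mS eps0 S0z) => //; lra.
Qed.
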